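(* Let $D=[0,1]^2\setminus\{(0,0),(1,1)\}$ and let $J\colon D\to\mathbb{R}$ be a Jamesian function. Suppose there is a function $w\colon(0,1)\to(0,\infty)$ such that \[ J(a,b)=\frac{w(a)}{w(a)+w(b)}\quad\text{for all }a,b\in(0,1) \] (i.e. $J$ is derived from the Bradley--Terry model with worths depending on the winning percentages). Then $J$ coincides on all of $D$ with the James function $P(a,b)=\dfrac{a(1-b)}{a(1-b)+b(1-a)}$.
   Context: Let $D=[0,1]^2\setminus\{(0,0),(1,1)\}$. A function $J\colon D\to\mathbb{R}$ is called Jamesian if it satisfies, for all $(a,b)\in D$: (a) $J(a,\tfrac12)=a$; (b) $J(a,0)=1$ for $0<a\le 1$; (c) $J(b,a)=1-J(a,b)$; (d) $J(1-b,1-a)=J(a,b)$; (e) $J(a,b)$ is a non-decreasing function of $a$ for each $0\le b\le 1$ and a strictly increasing function of $a$ for each $0<b<1$. *)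

From Stdlib Require Import Reals.
Open Scope R_scope.

Definition inD (a b : R) : Prop :=
  0 <= a <= 1 /\ 0 <= b <= 1 /\ ~ (a = 0 /\ b = 0) /\ ~ (a = 1 /\ b = 1).

(* A function J : D -> R, represented as a total function R -> R -> R whose
   values off D are irrelevant; all axioms are imposed only on D. *)
Definition Jamesian (J : R -> R -> R) : Prop :=
  (* (a) *) (forall a, 0 <= a <= 1 -> J a (1/2) = a) /\
  (* (b) *) (forall a, 0 < a <= 1 -> J a 0 = 1) /\
  (* (c) *) (forall a b, inD a b -> J b a = 1 - J a b) /\
  (* (d) *) (forall a b, inD a b -> J (1 - b) (1 - a) = J a b) /\
  (forall b a1 a2, 0 <= b <= 1 -> inD a1 b -> inD a2 b -> a1 <= a2 ->
     J a1 b <= J a2 b) /\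
  (forall b a1 a2, 0 < b < 1 -> 0 <= a1 <= 1 -> 0 <= a2 <= 1 -> a1 < a2 ->
     J a1 b < J a2 b).

Definition James (a b : R) : R :=
  a * (1 - b) / (a * (1 - b) + b * (1 - a)).

From Stdlib Require Import Reals Lra Psatz.
Open Scope R_scope.

(* On the edges of the square the axioms (b), (c), (d) alone force the values
   0 and 1 of the James function.  In the interior, axiom (a) evaluated in the
   Bradley-Terry form gives w x / (w x + w (1/2)) = x, i.e. each worth is
   proportional to the odds x / (1 - x); the Bradley-Terry ratio of two odds
   is exactly the James function. *)

Lemma James_odds (c a b : R) :
  0 < c -> 0 < a < 1 -> 0 < b < 1 ->
  c * (a / (1 - a)) / (c * (a / (1 - a)) + c * (b / (1 - b))) = James a b.
Proof.
  intros Hc Ha Hb; unfold James.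
  assert (0 < a * (1 - b) + b * (1 - a)) by nra.
  field; repeat split; nra.
Qed.

Section Boundary.

Variable J : R -> R -> R.
Hypothesis HJ : Jamesian J.

Lemma Jamesian_left1 (b : R) : 0 <= b < 1 -> J 1 b = 1.
Proof.
  intros Hb; destruct HJ as (_ & Hb0 & _ & Hsym & _).
  pose proof (Hsym (1 - b) 0) as E.
  replace (1 - 0) with 1 in E by ring; replace (1 - (1 - b)) with b in E by ring.
  rewrite E by (unfold inD; lra); apply Hb0; lra.
Qed.

Lemma Jamesian_edge (a b : R) :
  inD a b -> a = 0 \/ a = 1 \/ b = 0 \/ b = 1 -> J a b = James a b.
Proof.
  intros HD Hedge; pose proof HD as (Ha & Hb & N00 & N11).
  destruct HJ as (_ & Hb0 & Hswap & _).
  unfold James; destruct Hedge as [-> | [-> | [-> | ->]]].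
  - rewrite Hswap, Hb0 by (unfold inD in *; lra). field; lra.
  - rewrite Jamesian_left1 by lra. field; lra.
  - rewrite Hb0 by lra. field; lra.
  - rewrite Hswap, Jamesian_left1 by (unfold inD in *; lra). field; lra.
Qed.

End Boundary.

Lemma Bradley_Terry_worth_odds (J : R -> R -> R) (w : R -> R) (x : R) :
  (forall a, 0 <= a <= 1 -> J a (1/2) = a) ->
  (forall a, 0 < a < 1 -> 0 < w a) ->
  (forall a b, 0 < a < 1 -> 0 < b < 1 -> J a b = w a / (w a + w b)) ->
  0 < x < 1 -> w x = w (1/2) * (x / (1 - x)).
Proof.
  intros Hhalf Hw HJw Hx.
  pose proof (Hhalf x ltac:(lra)) as E; rewrite HJw in E by lra.
  pose proof (Hw x Hx); pose proof (Hw (1/2) ltac:(lra)).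
  assert (w x = x * (w x + w (1/2))) by (rewrite <- E at 2; field; lra).
  field_simplify_eq; nra.
Qed.

Theorem proposition4p1 (J : R -> R -> R) (w : R -> R) :
  Jamesian J ->
  (forall a, 0 < a < 1 -> 0 < w a) ->
  (forall a b, 0 < a < 1 -> 0 < b < 1 -> J a b = w a / (w a + w b)) ->
  forall a b, inD a b -> J a b = James a b.
Proof.
  intros HJ Hw HJw a b HD.
  destruct (Req_dec a 0), (Req_dec a 1), (Req_dec b 0), (Req_dec b 1);
    try (apply Jamesian_edge; tauto).
  pose proof HD as (Ha & Hb & _).
  assert (Ha' : 0 < a < 1) by lra; assert (Hb' : 0 < b < 1) by lra.
  destruct HJ as (Hhalf & _).
  rewrite HJw, (Bradley_Terry_worth_odds J w a), (Bradley_Terry_worth_odds J w b)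
    by assumption.
  apply James_odds; auto; apply Hw; lra.
Qed.
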